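(* Let $\mathrm{M}=\langle e_1+I,\ e_2+I\rangle$ and $\Lambda=\langle e_1+I,\ e_1/2+\sqrt3 e_2/2+I\rangle$, where $e_1,e_2$ are the standard basis vectors of $E^2$. Let $\mathrm{K}=\{(a+I)_\star : a\in E^2\}\subseteq \mathrm{Aff}(\mathrm{M})$ and let $$A=\begin{pmatrix}-1&0\\0&1\end{pmatrix},\ B=\begin{pmatrix}-1&1\\0&1\end{pmatrix},\ C=\begin{pmatrix}0&1\\1&0\end{pmatrix},\ D=\begin{pmatrix}1&-1/2\\0&\sqrt3/2\end{pmatrix}.$$ Then $\mathrm{Sym}(\mathrm{M})=\langle \mathrm{K}, A_\star, C_\star\rangle$, $D\mathrm{M}D^{-1}=\Lambda$, the map $D_\sharp:\mathrm{Aff}(\mathrm{M})\to\mathrm{Aff}(\Lambda)$ is an isomorphism, and $\mathrm{Sym}(\Lambda)=D_\sharp(\langle \mathrm{K}, B_\star, C_\star\rangle)$.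
   Context: Affine maps of $E^2$ are written $a+A$ (meaning $x\mapsto a+Ax$); $a+I$ is translation by $a$. For a 2-space group $\mathrm{M}$ (a discrete group of isometries of $E^2$ with compact quotient), let $N_A(\mathrm{M})$ be its normalizer in the affine group of $E^2$. Each $a+A\in N_A(\mathrm{M})$ induces an affinity $(a+A)_\star:\mathrm{M}x\mapsto\mathrm{M}(a+Ax)$ of the flat orbifold $E^2/\mathrm{M}$; $\mathrm{Aff}(\mathrm{M})$ is the group of all such affinities, and $\mathrm{Sym}(\mathrm{M})=\mathrm{Isom}(E^2/\mathrm{M})$ is its subgroup of isometries of the flat orbifold $E^2/\mathrm{M}$. For an affine map $\phi$ with $\phi\mathrm{M}\phi^{-1}=\Lambda$, $\phi_\sharp:\mathrm{Aff}(\mathrm{M})\to\mathrm{Aff}(\Lambda)$ is defined by $\phi_\sharp((a+A)_\star)=(\phi(a+A)\phi^{-1})_\star$. Here $E^2/\mathrm{M}$ is the square torus and $E^2/\Lambda$ the hexagonal torus. *)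

From HB Require Import structures.
From mathcomp Require Import all_boot all_order all_algebra.
From mathcomp Require Import classical_sets reals.
Set Implicit Arguments. Unset Strict Implicit. Unset Printing Implicit Defensive.
Import Order.TTheory GRing.Theory Num.Theory.
Local Open Scope ring_scope.
Local Open Scope classical_set_scope.

Section Affine.
Variable R : realType.

Definition vec := 'cV[R]_2.

Record aff := Aff { tr : vec ; lin : 'M[R]_2 }.

Definition app (f : aff) (x : vec) : vec := tr f + lin f *m x.
Definition acomp (f g : aff) : aff := Aff (tr f + lin f *m tr g) (lin f *m lin g).
Definition aid : aff := Aff 0 1%:M.
Definition ainv (f : aff) : aff := Aff (- (invmx (lin f) *m tr f)) (invmx (lin f)).
Definition transl (a : vec) : aff := Aff a 1%:M.
Definition linaff (A : 'M[R]_2) : aff := Aff 0 A.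
Definition is_affine (f : aff) : Prop := lin f \in unitmx.

Definition vec2 (x y : R) : vec := \col_(i < 2) (if i == 0 then x else y).
Definition mx2 (a b c d : R) : 'M[R]_2 :=
  \matrix_(i < 2, j < 2) (if i == 0 then (if j == 0 then a else b)
                          else (if j == 0 then c else d)).

Inductive gen_group (S : set aff) : aff -> Prop :=
| gg_base f : S f -> gen_group S f
| gg_one : gen_group S aid
| gg_comp f g : gen_group S f -> gen_group S g -> gen_group S (acomp f g)
| gg_inv f : gen_group S f -> gen_group S (ainv f).

Definition conj_eq (phi : aff) (G H : set aff) : Prop :=
  (forall g, G g -> H (acomp phi (acomp g (ainv phi)))) /\
  (forall h, H h -> exists2 g, G g & h = acomp phi (acomp g (ainv phi))).

Definition normA (G : set aff) : set aff :=
  [set phi | is_affine phi /\ conj_eq phi G G].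

Definition orbit (G : set aff) (x : vec) : set vec := [set app g x | g in G].

(* phi_* = psi_* as affinities of E^2/G:  G(phi x) = G(psi x) for all x *)
Definition star_eq (G : set aff) (phi psi : aff) : Prop :=
  forall x, orbit G (app phi x) = orbit G (app psi x).

(* Elements of Aff(G) are represented by elements of normA G modulo star_eq.
   The subgroup of Aff(G) generated by the affinities f_* (f in S), pulled
   back to normA G (i.e. the set of representatives of its elements). *)
Inductive gen_Aff (G : set aff) (S : set aff) : aff -> Prop :=
| ga_base f : S f -> normA G f -> gen_Aff G S f
| ga_one : gen_Aff G S aid
| ga_comp f g : gen_Aff G S f -> gen_Aff G S g -> gen_Aff G S (acomp f g)
| ga_inv f : gen_Aff G S f -> gen_Aff G S (ainv f)
| ga_eq f g : gen_Aff G S f -> normA G g -> star_eq G f g -> gen_Aff G S g.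

Definition edist (x y : vec) : R :=
  Num.sqrt ((x - y) 0 0 ^+ 2 + (x - y) 1 0 ^+ 2).

(* distance of the flat orbifold E^2/G between Gx and Gy *)
Definition orbdist (G : set aff) (x y : vec) : R :=
  inf [set edist x (app g y) | g in G].

(* phi_* is an isometry of E^2/G (phi_* is a bijection, being an affinity) *)
Definition star_isometry (G : set aff) (phi : aff) : Prop :=
  forall x y, orbdist G (app phi x) (app phi y) = orbdist G x y.

Definition in_Sym (G : set aff) (phi : aff) : Prop :=
  normA G phi /\ star_isometry G phi.

Definition e1 : vec := vec2 1 0.
Definition e2 : vec := vec2 0 1.
Definition Mgrp : set aff := gen_group [set transl e1; transl e2].
Definition Lgrp : set aff :=
  gen_group [set transl e1; transl (vec2 (1/2) (Num.sqrt 3 / 2))].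

Definition Kset : set aff := [set transl a | a in [set: vec]].

Definition Amx : 'M[R]_2 := mx2 (-1) 0 0 1.
Definition Bmx : 'M[R]_2 := mx2 (-1) 1 0 1.
Definition Cmx : 'M[R]_2 := mx2 0 1 1 0.
Definition Dmx : 'M[R]_2 := mx2 1 (-1/2) 0 (Num.sqrt 3 / 2).

Definition Daff : aff := linaff Dmx.
(* D_sharp on representatives *)
Definition Dsharp (phi : aff) : aff := acomp Daff (acomp phi (ainv Daff)).

End Affine.

Arguments Mgrp R : clear implicits.
Arguments Lgrp R : clear implicits.
Arguments Kset R : clear implicits.
Arguments Amx R : clear implicits.
Arguments Bmx R : clear implicits.
Arguments Cmx R : clear implicits.
Arguments Dmx R : clear implicits.
Arguments Daff R : clear implicits.

(* M and Lambda are the groups of translations by the lattices Z^2 and D Z^2.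
   An affine map normalises such a group iff its linear part maps the lattice
   onto itself, and two normalising maps induce the same affinity iff they
   differ by lattice vectors; the lattice being discrete, their linear parts
   then coincide. Points closer than 1/4 have orbifold distance equal to their
   Euclidean distance, so, after rescaling, an affinity is an isometry iff its
   linear part is orthogonal. Conjugated back to Z^2, that linear part is an
   integer matrix preserving x^2 + y^2 (resp. x^2 - xy + y^2); evaluating the
   form at e1, e2 and e1 + e2 leaves exactly the 8 (resp. 12) elements of the
   dihedral group generated by A and C (resp. B and C). Conjugation by D carries
   everything about Z^2 over to D Z^2, which makes D_sharp an isomorphism. *)

From Pilot Require Import Defs.
From HB Require Import structures.
From mathcomp Require Import all_boot all_order all_algebra.
From mathcomp Require Import boolp classical_sets reals.
From mathcomp Require Import zify ring lra.
Import Order.TTheory GRing.Theory Num.Theory.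
Local Open Scope ring_scope.
Local Open Scope classical_set_scope.
Set Implicit Arguments. Unset Strict Implicit. Unset Printing Implicit Defensive.

(* [(a, b, c, d)] encodes the integer matrix [[a, b], [c, d]]. *)
Definition int4 := (int * int * int * int)%type.

Definition mulint4 (t s : int4) : int4 :=
  let: (a, b, c, d) := t in let: (a', b', c', d') := s in
  (a * a' + b * c', a * b' + b * d', c * a' + d * c', c * b' + d * d').

Section IntegralIsometries.
Variable G : int4 -> Prop.
Hypothesis GM : forall t s, G t -> G s -> G (mulint4 t s).

Lemma square_isometry_generated (a b c d : int) : G (-1, 0, 0, 1) -> G (0, 1, 1, 0) ->
  a * a + c * c = 1 -> b * b + d * d = 1 -> (a + b) * (a + b) + (c + d) * (c + d) = 2 ->
  G (a, b, c, d).
Proof.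
move=> gA gC h1 h2 h3.
have gAA : G (1, 0, 0, 1) := GM gA gA.
have gAC : G (0, -1, 1, 0) := GM gA gC.
have gCA : G (0, 1, -1, 0) := GM gC gA.
have gACA : G (0, -1, -1, 0) := GM gAC gA.
have gCAC : G (1, 0, 0, -1) := GM gCA gC.
have gACAC : G (-1, 0, 0, -1) := GM gACA gC.
have [ha hb hc hd] : [/\ a = 0 \/ a = 1 \/ a = -1, b = 0 \/ b = 1 \/ b = -1,
  c = 0 \/ c = 1 \/ c = -1 & d = 0 \/ d = 1 \/ d = -1] by split; nia.
move: h1 h2 h3; case: ha => [->|[->|->]]; case: hb => [->|[->|->]];
  case: hc => [->|[->|->]]; case: hd => [->|[->|->]]; move=> h1 h2 h3;
  first [assumption | exfalso; lia].
Qed.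

Lemma hex_isometry_generated (a b c d : int) : G (-1, 1, 0, 1) -> G (0, 1, 1, 0) ->
  a * a - a * c + c * c = 1 -> b * b - b * d + d * d = 1 ->
  (a + b) * (a + b) - (a + b) * (c + d) + (c + d) * (c + d) = 1 ->
  G (a, b, c, d).
Proof.
move=> gB gC h1 h2 h3.
have gBB : G (1, 0, 0, 1) := GM gB gB.
have gBC : G (1, -1, 1, 0) := GM gB gC.
have gCB : G (0, 1, -1, 1) := GM gC gB.
have gBCB : G (-1, 0, -1, 1) := GM gBC gB.
have gCBC : G (1, 0, 1, -1) := GM gCB gC.
have gBCBC : G (0, -1, 1, -1) := GM gBCB gC.
have gCBCB : G (-1, 1, -1, 0) := GM gCBC gB.
have gBCBCB : G (0, -1, -1, 0) := GM gBCBC gB.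
have gCBCBC : G (1, -1, 0, -1) := GM gCBCB gC.
have gBCBCBC : G (-1, 0, 0, -1) := GM gBCBCB gC.
have [ha hb hc hd] : [/\ a = 0 \/ a = 1 \/ a = -1, b = 0 \/ b = 1 \/ b = -1,
  c = 0 \/ c = 1 \/ c = -1 & d = 0 \/ d = 1 \/ d = -1] by split; nia.
move: h1 h2 h3; case: ha => [->|[->|->]]; case: hb => [->|[->|->]];
  case: hc => [->|[->|->]]; case: hd => [->|[->|->]]; move=> h1 h2 h3;
  first [assumption | exfalso; lia].
Qed.
End IntegralIsometries.

Section Flat2.
Variable R : realType.
Local Notation vec := (vec R).
Local Notation aff := (aff R).
Implicit Types (a b u v w x y : vec) (P Q U : 'M[R]_2) (f g : aff) (L : set vec).

Lemma ord2P (i : 'I_2) : i = 0 \/ i = 1.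
Proof. by case: i => [[|[|i]] Hi]; [left|right|]; try apply: val_inj. Qed.

Lemma vecP u v : u 0 0 = v 0 0 -> u 1 0 = v 1 0 -> u = v.
Proof.
move=> h0 h1; apply/matrixP => i j; rewrite (ord1 j).
by case: (ord2P i) => ->.
Qed.

Lemma mx2P P Q :
  P 0 0 = Q 0 0 -> P 0 1 = Q 0 1 -> P 1 0 = Q 1 0 -> P 1 1 = Q 1 1 -> P = Q.
Proof.
move=> h00 h01 h10 h11; apply/matrixP => i j.
by case: (ord2P i) => ->; case: (ord2P j) => ->.
Qed.

Lemma vec2_eta u : u = vec2 (u 0 0) (u 1 0).
Proof. by apply: vecP; rewrite !mxE. Qed.

Lemma mx2_eta P : P = mx2 (P 0 0) (P 0 1) (P 1 0) (P 1 1).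
Proof. by apply: mx2P; rewrite !mxE. Qed.

Lemma mulmx_mx2_vec2 (a b c d x y : R) :
  mx2 a b c d *m vec2 x y = vec2 (a * x + b * y) (c * x + d * y).
Proof. by apply: vecP; rewrite !mxE !big_ord_recl big_ord0 !mxE /= addr0. Qed.

Lemma mulmx_mx2 (a b c d a' b' c' d' : R) :
  mx2 a b c d *m mx2 a' b' c' d' =
  mx2 (a * a' + b * c') (a * b' + b * d') (c * a' + d * c') (c * b' + d * d').
Proof. by apply: mx2P; rewrite !mxE !big_ord_recl big_ord0 !mxE /= addr0. Qed.

Lemma vec2D (x y x' y' : R) : vec2 x y + vec2 x' y' = vec2 (x + x') (y + y').
Proof. by apply: vecP; rewrite !mxE. Qed.

Lemma vec2Z (t x y : R) : t *: vec2 x y = vec2 (t * x) (t * y).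
Proof. by apply: vecP; rewrite !mxE. Qed.

Lemma vec2_0 : vec2 0 0 = 0 :> vec.
Proof. by apply: vecP; rewrite !mxE. Qed.

Lemma mx2_1 : mx2 1 0 0 1 = 1%:M :> 'M[R]_2.
Proof. by apply: mx2P; rewrite !mxE. Qed.

Lemma app_transl a x : app (transl a) x = a + x.
Proof. by rewrite /app /= mul1mx. Qed.

Lemma app_sub f x y : app f x - app f y = lin f *m (x - y).
Proof. by rewrite /app mulmxBr opprD addrACA addrN add0r. Qed.

Lemma acomp_transl a b : acomp (transl a) (transl b) = transl (a + b).
Proof. by rewrite /acomp /transl /= !mul1mx. Qed.

Lemma ainv_transl a : ainv (transl a) = transl (- a).
Proof. by rewrite /ainv /transl /= invmx1 mul1mx. Qed.

Lemma acomp_linaff P Q : acomp (linaff P) (linaff Q) = linaff (P *m Q).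
Proof. by rewrite /acomp /linaff /= mulmx0 addr0. Qed.

Lemma transl_linaffE f : acomp (transl (tr f)) (linaff (lin f)) = f.
Proof. by case: f => a P; rewrite /acomp /= mulmx0 addr0 mul1mx. Qed.

Lemma conj_transl f a : lin f \in unitmx ->
  acomp f (acomp (transl a) (ainv f)) = transl (lin f *m a).
Proof.
case: f => b P /= uP; rewrite /acomp /transl /ainv /=; congr Aff.
  by rewrite mul1mx mulmxDr mulmxN mulmxA mulmxV // mul1mx addrC subrK.
by rewrite mul1mx mulmxV.
Qed.

Definition conjlin U f := acomp (linaff U) (acomp f (ainv (linaff U))).

Lemma conjlinE U f : conjlin U f = Aff (U *m tr f) (U *m (lin f *m invmx U)).
Proof. by rewrite /conjlin /acomp /= mulmx0 oppr0 mulmx0 addr0 add0r. Qed.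

Lemma app_conjlin U f x : app (conjlin U f) x = U *m app f (invmx U *m x).
Proof. by rewrite conjlinE /app /= mulmxDr !mulmxA. Qed.

Lemma conjlinK U f : U \in unitmx -> conjlin U (conjlin (invmx U) f) = f.
Proof.
move=> uU; case: f => a P; rewrite !conjlinE /= invmxK !mulmxA mulmxV //.
by rewrite !mul1mx -mulmxA mulmxV // mulmx1.
Qed.

Lemma conjlinM U f g : U \in unitmx ->
  conjlin U (acomp f g) = acomp (conjlin U f) (conjlin U g).
Proof.
move=> uU; rewrite !conjlinE /acomp /=; congr Aff.
  by rewrite mulmxDr !mulmxA mulmxKV.
by rewrite !mulmxA mulmxKV.
Qed.

Definition transl_group L : set aff := [set transl a | a in L].

Record addsubgroup L : Prop := AddSubgroup {
  addsubgroup0 : L 0;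
  addsubgroupD : forall a b, L a -> L b -> L (a + b);
  addsubgroupN : forall a, L a -> L (- a) }.

Lemma addsubgroupB L a b : addsubgroup L -> L a -> L b -> L (a - b).
Proof. by move=> [_ LD LN] La Lb; apply/LD/LN. Qed.

Definition int_span u v : set vec :=
  [set m *: u + n *: v | m in [set` Num.int] & n in [set` Num.int]].

Lemma gen_group_transl_scale S w m : gen_group S (transl w) -> m \is a Num.int ->
  gen_group S (transl (m *: w)).
Proof.
move=> Sw /intrP [k ->].
have gen_nat n : gen_group S (transl (n%:R *: w)).
  elim: n => [|n IH]; first by rewrite scale0r; exact: gg_one.
  by rewrite mulrS scalerDl scale1r -acomp_transl; apply: gg_comp.
case: k => n; first exact: gen_nat.
by rewrite NegzE mulrNz scaleNr -ainv_transl; apply/gg_inv/gen_nat.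
Qed.

Lemma int_span_lin u v m n : m \is a Num.int -> n \is a Num.int ->
  int_span u v (m *: u + n *: v).
Proof. by move=> hm hn; exists m => //; exists n. Qed.

Lemma gen_group_transl2 u v :
  gen_group [set transl u; transl v] = transl_group (int_span u v).
Proof.
have span_u : int_span u v u.
  by have := int_span_lin u v (rpred1 _) (rpred0 _); rewrite scale1r scale0r addr0.
have span_v : int_span u v v.
  by have := int_span_lin u v (rpred0 _) (rpred1 _); rewrite scale1r scale0r add0r.
apply/funext => f; apply/propext; split.
- elim=> {f} [f [->|->]| |f g _ [_ [m hm [n hn <-]] <-] _ [_ [m' hm' [n' hn' <-]] <-]
             |f _ [_ [m hm [n hn <-]] <-]].
  + by exists u.
  + by exists v.
  + by exists 0 => //; have := int_span_lin u v (rpred0 _) (rpred0 _); rewrite !scale0r addr0.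
  + rewrite acomp_transl addrACA -!scalerDl; eexists => //.
    by apply: int_span_lin; apply: rpredD.
  + rewrite ainv_transl opprD -!scaleNr; eexists => //.
    by apply: int_span_lin; rewrite rpredN.
- case=> _ [m hm [n hn <-]] <-; rewrite -acomp_transl.
  by apply: gg_comp; apply: gen_group_transl_scale => //; apply: gg_base; [left|right].
Qed.

Lemma orbit_transl_group L x : Defs.orbit (transl_group L) x = [set a + x | a in L].
Proof.
apply/funext => y; apply/propext; split.
  by case=> _ [a La <-] <-; exists a => //; rewrite app_transl.
by case=> a La <-; exists (transl a); [exists a | rewrite app_transl].
Qed.

Lemma star_eq_transl_group L f g : addsubgroup L ->
  star_eq (transl_group L) f g <-> forall x, L (app f x - app g x).
Proof.
move=> gL; split => h x.
  have : Defs.orbit (transl_group L) (app f x) (app f x).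
    by rewrite orbit_transl_group; exists 0; [exact: addsubgroup0 | rewrite add0r].
  by rewrite h orbit_transl_group; case=> a La <-; rewrite addrK.
rewrite !orbit_transl_group; apply/funext => y; apply/propext; split.
  case=> a La <-; exists (a + (app f x - app g x)); first exact: addsubgroupD.
  by rewrite -addrA subrK.
case=> a La <-; exists (a - (app f x - app g x)); first exact: addsubgroupB.
by rewrite opprB -addrA subrK.
Qed.

Lemma normA_transl_group L f : normA (transl_group L) f <->
  [/\ lin f \in unitmx, forall a, L a -> L (lin f *m a) &
      forall a, L a -> exists2 a', L a' & a = lin f *m a'].
Proof.
split.
  case=> uf [fLL LfL]; split => // a La.
    have := fLL (transl a) (ex_intro2 _ _ a La erefl).
    by rewrite conj_transl //; case=> b Lb [<-].
  have [g [a' La' <-]] := LfL (transl a) (ex_intro2 _ _ a La erefl).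
  by rewrite conj_transl // => -[->]; exists a'.
case=> uf fL Lf; split => //; split.
  by move=> _ [a La <-]; rewrite conj_transl //; exists (lin f *m a) => //; apply: fL.
move=> _ [a La <-]; have [a' La' ->] := Lf a La.
by exists (transl a'); [exists a' | rewrite conj_transl].
Qed.

Lemma normA_transl L a : normA (transl_group L) (transl a).
Proof.
apply/normA_transl_group; split => [|b Lb|b Lb]; rewrite ?mul1mx ?unitmx1 //.
by exists b; rewrite ?mul1mx.
Qed.

Lemma normA_acomp L f g : normA (transl_group L) f -> normA (transl_group L) g ->
  normA (transl_group L) (acomp f g).
Proof.
move=> /normA_transl_group [uf fL Lf] /normA_transl_group [ug gL Lg].
apply/normA_transl_group => /=; split.
- by rewrite unitmx_mul uf ug.
- by move=> a La; rewrite -mulmxA; apply/fL/gL.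
- move=> a La; have [b Lb ->] := Lf a La; have [c Lc ->] := Lg b Lb.
  by exists c => //; rewrite mulmxA.
Qed.

Lemma normA_ainv L f : normA (transl_group L) f -> normA (transl_group L) (ainv f).
Proof.
move=> /normA_transl_group [uf fL Lf]; apply/normA_transl_group => /=; split.
- by rewrite unitmx_inv.
- by move=> a La; have [b Lb ->] := Lf a La; rewrite mulKmx.
- by move=> a La; exists (lin f *m a); [exact: fL | rewrite mulKmx].
Qed.

Lemma normA_linaff_invol L P : P *m P = 1%:M -> (forall a, L a -> L (P *m a)) ->
  normA (transl_group L) (linaff P).
Proof.
move=> PP PL; apply/normA_transl_group => /=; split => //.
- by case: (mulmx1_unit PP).
- by move=> a La; exists (P *m a); [exact: PL | rewrite mulmxA PP mul1mx].
Qed.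

Lemma gen_Aff_normA L S f : gen_Aff (transl_group L) S f -> normA (transl_group L) f.
Proof.
elim=> {f} [f _ nf | | f g _ nf _ ng | f _ nf | f g _ _ ng _] //.
- exact: (normA_transl _ 0).
- exact: normA_acomp.
- exact: normA_ainv.
Qed.

Definition nrm2 w : R := w 0 0 ^+ 2 + w 1 0 ^+ 2.

Lemma nrm2_ge0 w : 0 <= nrm2 w.
Proof. by rewrite /nrm2 addr_ge0 ?sqr_ge0. Qed.

Lemma nrm2_vec2 (x y : R) : nrm2 (vec2 x y) = x ^+ 2 + y ^+ 2.
Proof. by rewrite /nrm2 !mxE. Qed.

Lemma nrm2Z (t : R) w : nrm2 (t *: w) = t ^+ 2 * nrm2 w.
Proof. by rewrite /nrm2 !mxE; ring. Qed.

Definition separated L := forall a, L a -> a != 0 -> 1 <= nrm2 a.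

Lemma separated_small L a : separated L -> L a -> nrm2 a <= 1/16 -> a = 0.
Proof.
move=> sepL La small; apply/eqP/negPn/negP => /(sepL a La).
by move: small; lra.
Qed.

Lemma exists_small_scale (r s : R) : 0 <= r -> 0 <= s ->
  exists2 t : R, 0 < t & t ^+ 2 * r <= 1/16 /\ t ^+ 2 * s <= 1/16.
Proof.
move=> r0 s0; exists (4 * (1 + r + s))^-1; first by rewrite invr_gt0; lra.
have tk : (4 * (1 + r + s))^-1 * (4 * (1 + r + s)) = 1 by rewrite mulVf //; lra.
set t := _^-1 in tk *; have t0 : 0 < t by rewrite /t invr_gt0; lra.
split; nra.
Qed.

Lemma separated_mx_eq0 L P : separated L -> (forall x, L (P *m x)) -> P = 0.
Proof.
move=> sepL PL.
have P0 x : P *m x = 0.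
  have [t t0 [small _]] := exists_small_scale (nrm2_ge0 (P *m x)) (nrm2_ge0 0).
  have : t *: (P *m x) = 0.
    by apply: (separated_small sepL); rewrite ?nrm2Z // scalemxAr.
  by move/eqP; rewrite scaler_eq0 gt_eqF //= => /eqP.
apply/matrixP => i j; have := congr1 (fun w : vec => w i 0) (P0 (delta_mx j 0)).
by rewrite -colE !mxE.
Qed.

Lemma star_eq_lin L f g : addsubgroup L -> separated L ->
  star_eq (transl_group L) f g -> lin f = lin g.
Proof.
move=> gL sepL /(star_eq_transl_group _ _ gL) fgL; apply/eqP; rewrite -subr_eq0.
apply/eqP/(separated_mx_eq0 sepL) => x.
have -> : (lin f - lin g) *m x = (app f x - app g x) - (app f 0 - app g 0).
  rewrite mulmxBl -[x in LHS]subr0 -!app_sub !opprB addrACA [RHS]addrACA.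
  by rewrite [- app g x + _]addrC.
exact: addsubgroupB.
Qed.

Definition preserves (q : vec -> R) P := forall w, q (P *m w) = q w.

Lemma orbdist_transl_group L x y :
  orbdist (transl_group L) x y = inf [set Num.sqrt (nrm2 (x - (a + y))) | a in L].
Proof.
rewrite /orbdist; congr inf; apply/funext => r; apply/propext; split.
  by case=> _ [a La <-] <-; exists a => //; rewrite app_transl.
by case=> a La <-; exists (transl a); [exists a | rewrite app_transl].
Qed.

Lemma nrm2_le_subr w a : nrm2 w <= 1/16 -> 1 <= nrm2 a -> nrm2 w <= nrm2 (w - a).
Proof.
rewrite /nrm2 !mxE => w_small a_large.
(* 2 <w, a> <= 4 |w|^2 + |a|^2 / 4 *)
have s0 : 0 <= (2 * w 0 0 - a 0 0 / 2) ^+ 2 by apply: sqr_ge0.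
have s1 : 0 <= (2 * w 1 0 - a 1 0 / 2) ^+ 2 by apply: sqr_ge0.
nra.
Qed.

Lemma orbdist_small L x y : addsubgroup L -> separated L -> nrm2 (x - y) <= 1/16 ->
  orbdist (transl_group L) x y = Num.sqrt (nrm2 (x - y)).
Proof.
move=> gL sepL small; rewrite orbdist_transl_group.
set S := [set _ | _ in _]; set d := Num.sqrt _.
have Sd : S d by exists 0; [exact: addsubgroup0 | rewrite add0r].
have d_lb : lbound S d.
  move=> _ [a La <-]; rewrite ler_sqrt ?nrm2_ge0 // opprD addrA.
  have [->|a0] := eqVneq a 0; first by rewrite subr0.
  by rewrite addrAC nrm2_le_subr // sepL.
apply/le_anti/andP; split; first exact: (ge_inf (ex_intro _ d d_lb)).
by apply: lb_le_inf => //; exists d.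
Qed.

Lemma star_isometry_transl_group L f : addsubgroup L -> separated L ->
  normA (transl_group L) f -> star_isometry (transl_group L) f <-> preserves nrm2 (lin f).
Proof.
move=> gL sepL /normA_transl_group [uf fL Lf]; split => [iso | fnrm x y].
  have small_ok w : nrm2 w <= 1/16 -> nrm2 (lin f *m w) <= 1/16 ->
      nrm2 (lin f *m w) = nrm2 w.
    move=> w_small fw_small; have := iso w 0.
    rewrite !orbdist_small ?app_sub ?subr0 // => /eqP.
    by rewrite eqr_sqrt ?nrm2_ge0 // => /eqP.
  move=> w; have [t t0 [w_small fw_small]] :=
    exists_small_scale (nrm2_ge0 w) (nrm2_ge0 (lin f *m w)).
  have := small_ok (t *: w); rewrite -scalemxAr !nrm2Z => /(_ w_small fw_small).
  by apply: mulfI; rewrite expf_neq0 // gt_eqF.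
rewrite !orbdist_transl_group; congr inf; apply/funext => r; apply/propext.
have shift a : app f x - (lin f *m a + app f y) = lin f *m (x - (a + y)).
  by rewrite opprD addrCA app_sub -mulmxN -mulmxDr addrCA opprD.
split.
  case=> a La <-; have [a' La' ->] := Lf a La.
  by exists a' => //; rewrite shift fnrm.
by case=> a La <-; exists (lin f *m a); [exact: fL | rewrite shift fnrm].
Qed.

Definition mx_image U L : set vec := [set U *m a | a in L].

Lemma addsubgroup_mx_image U L : addsubgroup L -> addsubgroup (mx_image U L).
Proof.
move=> [L0 LD LN]; split; first by exists 0; rewrite ?mulmx0.
  by move=> _ _ [a La <-] [b Lb <-]; exists (a + b); rewrite ?mulmxDr //; apply: LD.
by move=> _ [a La <-]; exists (- a); rewrite ?mulmxN //; apply: LN.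
Qed.

Lemma conj_eq_linaff U L : U \in unitmx ->
  conj_eq (linaff U) (transl_group L) (transl_group (mx_image U L)).
Proof.
move=> uU; split.
  by move=> _ [a La <-]; rewrite conj_transl //; exists (U *m a) => //; exists a.
move=> _ [_ [a La <-] <-]; exists (transl a); first by exists a.
by rewrite conj_transl.
Qed.

Lemma normA_conjlin U L f : U \in unitmx ->
  normA (transl_group (mx_image U L)) (conjlin U f) <-> normA (transl_group L) f.
Proof.
move=> uU; rewrite !normA_transl_group conjlinE /= !unitmx_mul unitmx_inv uU andbT.
have conjUa a : U *m (lin f *m invmx U) *m (U *m a) = U *m (lin f *m a).
  by rewrite -!mulmxA mulKmx.
split=> -[uf fL Lf]; split => //.
- move=> a La; have [b Lb] := fL _ (ex_intro2 _ _ a La erefl).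
  by rewrite conjUa => /(can_inj (mulKmx uU)) <-.
- move=> a La; have [_ [b Lb <-]] := Lf _ (ex_intro2 _ _ a La erefl).
  by rewrite conjUa => /(can_inj (mulKmx uU)) ->; exists b.
- by move=> _ [a La <-]; rewrite conjUa; exists (lin f *m a) => //; apply: fL.
- move=> _ [a La <-]; have [b Lb ->] := Lf a La.
  by exists (U *m b); [exists b | rewrite conjUa].
Qed.

Lemma star_eq_conjlin U L f g : U \in unitmx -> addsubgroup L ->
  star_eq (transl_group L) f g <->
  star_eq (transl_group (mx_image U L)) (conjlin U f) (conjlin U g).
Proof.
move=> uU gL; rewrite !star_eq_transl_group //; last exact: addsubgroup_mx_image.
split => fgL x.
  by rewrite !app_conjlin -mulmxBr; exists (app f (invmx U *m x) - app g (invmx U *m x)).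
have [a La] := fgL (U *m x); rewrite !app_conjlin mulKmx // -mulmxBr.
by move/(can_inj (mulKmx uU)) <-.
Qed.

Definition Z2 : set vec := [set w | w 0 0 \is a Num.int /\ w 1 0 \is a Num.int].

Lemma Z2_vec2 (x y : R) : Z2 (vec2 x y) <-> x \is a Num.int /\ y \is a Num.int.
Proof. by rewrite /Z2 /= !mxE. Qed.

Lemma Z2P w : Z2 w -> exists k l : int, w = vec2 k%:~R l%:~R.
Proof. by case=> /intrP [k hk] /intrP [l hl]; exists k, l; rewrite [w]vec2_eta hk hl. Qed.

Lemma addsubgroup_Z2 : addsubgroup Z2.
Proof.
split; first by rewrite /Z2 /= !mxE rpred0.
  by move=> a b [? ?] [? ?]; rewrite /Z2 /= !mxE !rpredD.
by move=> a [? ?]; rewrite /Z2 /= !mxE !rpredN.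
Qed.

Lemma separated_Z2 : separated Z2.
Proof.
move=> _ /Z2P [k [l ->]] nz; rewrite nrm2_vec2.
have : (k != 0) || (l != 0).
  by apply: contraR nz; rewrite negb_or !negbK => /andP [/eqP -> /eqP ->]; rewrite vec2_0.
move=> kl; have : (1 <= k * k + l * l)%R by nia.
by rewrite !expr2 -!intrM -intrD ler1z.
Qed.

Lemma Dmx_vec2 (x y : R) : Dmx R *m vec2 x y = vec2 (x - y / 2) (Num.sqrt 3 / 2 * y).
Proof. by rewrite /Dmx mulmx_mx2_vec2; congr vec2; field. Qed.

Lemma nrm2_Dmx (x y : R) : nrm2 (Dmx R *m vec2 x y) = x ^+ 2 - x * y + y ^+ 2.
Proof.
have sqrt3 : Num.sqrt 3 ^+ 2 = 3 :> R by rewrite sqr_sqrtr.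
by rewrite Dmx_vec2 nrm2_vec2 !exprMn sqrt3; field.
Qed.

Lemma Dmx_unit : Dmx R \in unitmx.
Proof.
have s0 : Num.sqrt 3 != 0 :> R by rewrite sqrtr_eq0 -ltNge.
have : Dmx R *m mx2 1 (1 / Num.sqrt 3) 0 (2 / Num.sqrt 3) = 1%:M.
  by rewrite /Dmx mulmx_mx2 -mx2_1; congr mx2; field.
by case/mulmx1_unit.
Qed.

Lemma separated_DZ2 : separated (mx_image (Dmx R) Z2).
Proof.
move=> _ [_ /Z2P [k [l ->]] <-] nz; rewrite nrm2_Dmx.
have : (k != 0) || (l != 0).
  apply: contraR nz; rewrite negb_or !negbK => /andP [/eqP -> /eqP ->].
  by rewrite vec2_0 mulmx0.
move=> kl; have : (1 <= k * k - k * l + l * l)%R by nia.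
by rewrite !expr2 -!intrM -intrB -intrD ler1z.
Qed.

Lemma Mgrp_Z2 : Mgrp R = transl_group Z2.
Proof.
rewrite /Mgrp gen_group_transl2; congr transl_group.
apply/funext => w; apply/propext; split.
  case=> m hm [n hn <-].
  by rewrite /e1 /e2 !vec2Z vec2D Z2_vec2 !mulr1 !mulr0 addr0 add0r.
case=> h0 h1; rewrite [w]vec2_eta; exists (w 0 0) => //; exists (w 1 0) => //.
by rewrite /e1 /e2 !vec2Z vec2D !mulr1 !mulr0 addr0 add0r.
Qed.

Lemma Lgrp_DZ2 : Lgrp R = transl_group (mx_image (Dmx R) Z2).
Proof.
rewrite /Lgrp gen_group_transl2; congr transl_group.
apply/funext => w; apply/propext; split.
  case=> m hm [n hn <-]; exists (vec2 (m + n) n); first by rewrite Z2_vec2 rpredD.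
  by rewrite Dmx_vec2 /e1 !vec2Z vec2D; congr vec2; field.
case=> z [h0 h1] <-; rewrite [z]vec2_eta Dmx_vec2.
exists (z 0 0 - z 1 0); first exact: rpredB.
by exists (z 1 0) => //; rewrite /e1 !vec2Z vec2D; congr vec2; field.
Qed.

Definition intmx (t : int4) : 'M[R]_2 :=
  let: (a, b, c, d) := t in mx2 a%:~R b%:~R c%:~R d%:~R.

Lemma intmx_mul t s : intmx t *m intmx s = intmx (mulint4 t s).
Proof.
case: t => [[[a b] c] d]; case: s => [[[a' b'] c'] d'].
by rewrite /= mulmx_mx2; congr mx2; rewrite intrD !intrM.
Qed.

Lemma intmx_vec2 (a b c d : int) (x y : R) : intmx (a, b, c, d) *m vec2 x y =
  vec2 (a%:~R * x + b%:~R * y) (c%:~R * x + d%:~R * y).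
Proof. exact: mulmx_mx2_vec2. Qed.

Lemma intmx_Z2 t z : Z2 z -> Z2 (intmx t *m z).
Proof.
case: t => [[[a b] c] d] /Z2P [k [l ->]].
by rewrite intmx_vec2 Z2_vec2 !rpredD ?rpredM ?intr_int.
Qed.

Lemma Z2_stable_intmx P : (forall z, Z2 z -> Z2 (P *m z)) -> exists t, P = intmx t.
Proof.
move=> PZ2; have := PZ2 _ ((Z2_vec2 1 0).2 (conj (rpred1 _) (rpred0 _))).
have := PZ2 _ ((Z2_vec2 0 1).2 (conj (rpred0 _) (rpred1 _))).
rewrite {1 2}[P]mx2_eta !mulmx_mx2_vec2 !mulr1 !mulr0 !addr0 !add0r.
move=> /Z2_vec2 [/intrP [b hb] /intrP [d hd]] /Z2_vec2 [/intrP [a ha] /intrP [c hc]].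
by exists (a, b, c, d); rewrite [P]mx2_eta ha hb hc hd.
Qed.

Lemma normA_Z2_intmx f : normA (transl_group Z2) f -> exists t, lin f = intmx t.
Proof. by case/normA_transl_group => _ /Z2_stable_intmx. Qed.

Lemma preserves_intmx_basis q (a b c d : int) : preserves q (intmx (a, b, c, d)) ->
  [/\ q (vec2 a%:~R c%:~R) = q (vec2 1 0), q (vec2 b%:~R d%:~R) = q (vec2 0 1) &
      q (vec2 (a + b)%:~R (c + d)%:~R) = q (vec2 1 1)].
Proof.
move=> qP; split; [move: (qP (vec2 1 0)) | move: (qP (vec2 0 1)) | move: (qP (vec2 1 1))];
  by rewrite intmx_vec2 => <-; congr (q (vec2 _ _)); rewrite ?intrD; ring.
Qed.

Lemma preserves_nrm2_intmx (a b c d : int) : preserves nrm2 (intmx (a, b, c, d)) ->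
  [/\ a * a + c * c = 1, b * b + d * d = 1 & (a + b) * (a + b) + (c + d) * (c + d) = 2].
Proof.
case/preserves_intmx_basis; rewrite !nrm2_vec2 !intrD => h1 h2 h3.
by split; apply: (@intr_inj R); rewrite !(intrD, intrM) /=; lra.
Qed.

Lemma preserves_hex_intmx (a b c d : int) :
  preserves (fun w => nrm2 (Dmx R *m w)) (intmx (a, b, c, d)) ->
  [/\ a * a - a * c + c * c = 1, b * b - b * d + d * d = 1 &
      (a + b) * (a + b) - (a + b) * (c + d) + (c + d) * (c + d) = 1].
Proof.
case/preserves_intmx_basis; rewrite !nrm2_Dmx !intrD => h1 h2 h3.
by split; apply: (@intr_inj R); rewrite !(intrD, intrN, intrM) /=; lra.
Qed.

Lemma preserves_conjlin q U f : U \in unitmx ->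
  preserves q (lin (conjlin U f)) <-> preserves (fun w => q (U *m w)) (lin f).
Proof.
move=> uU; rewrite conjlinE /=; split=> qf w.
  by rewrite -(qf (U *m w)) -!mulmxA mulKmx.
by rewrite -!mulmxA qf mulKVmx.
Qed.

Lemma gen_Aff_preserves L S q f : addsubgroup L -> separated L ->
  (forall g, S g -> preserves q (lin g)) ->
  gen_Aff (transl_group L) S f -> preserves q (lin f).
Proof.
move=> gL sepL Sq; elim=> {f} [f Sf _ | | f g _ qf _ qg | f gf qf | f g _ qf _ fg].
- exact: Sq.
- by move=> w; rewrite mul1mx.
- by move=> w /=; rewrite -mulmxA qf qg.
- have [uf _ _] := (normA_transl_group _ _).1 (gen_Aff_normA gf).
  by move=> w /=; rewrite -[in RHS](mulKVmx uf w) qf.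
- by move: (star_eq_lin gL sepL fg) => <-.
Qed.

Lemma gen_Aff_transl_linaff L S f : (forall a, S (transl a)) ->
  gen_Aff (transl_group L) S (linaff (lin f)) -> gen_Aff (transl_group L) S f.
Proof.
move=> St gf; rewrite -[f]transl_linaffE; apply: ga_comp gf.
by apply: ga_base; [exact: St | exact: normA_transl].
Qed.

Lemma gen_Aff_intmx_mul G S t s : gen_Aff G S (linaff (intmx t)) ->
  gen_Aff G S (linaff (intmx s)) -> gen_Aff G S (linaff (intmx (mulint4 t s))).
Proof. by rewrite -intmx_mul -acomp_linaff; apply: ga_comp. Qed.

Lemma gen_Aff_intmx_invol S t : intmx t *m intmx t = 1%:M -> S (linaff (intmx t)) ->
  gen_Aff (transl_group Z2) S (linaff (intmx t)).
Proof.
move=> tt St; apply: ga_base => //.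
by apply: normA_linaff_invol tt _ => z; apply: intmx_Z2.
Qed.

Lemma Sym_Mgrp phi : normA (Mgrp R) phi ->
  in_Sym (Mgrp R) phi <->
  gen_Aff (Mgrp R) (Kset R `|` [set linaff (Amx R); linaff (Cmx R)]) phi.
Proof.
set S := _ `|` _; rewrite Mgrp_Z2 => nphi.
have St a : S (transl a) by left; exists a.
have gA : gen_Aff (transl_group Z2) S (linaff (intmx (-1, 0, 0, 1))).
  by apply: gen_Aff_intmx_invol; [rewrite intmx_mul -mx2_1 | right; left].
have gC : gen_Aff (transl_group Z2) S (linaff (intmx (0, 1, 1, 0))).
  by apply: gen_Aff_intmx_invol; [rewrite intmx_mul -mx2_1 | right; right].
have iso_iff := star_isometry_transl_group addsubgroup_Z2 separated_Z2 nphi.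
split => [[_ /iso_iff phi_iso] | gphi].
  have [[[[a b] c] d] phiE] := normA_Z2_intmx nphi.
  rewrite phiE in phi_iso; have [h1 h2 h3] := preserves_nrm2_intmx phi_iso.
  apply: gen_Aff_transl_linaff St _; rewrite phiE.
  exact: (square_isometry_generated (@gen_Aff_intmx_mul _ S) gA gC h1 h2 h3).
split => //; apply/iso_iff.
apply: (gen_Aff_preserves addsubgroup_Z2 separated_Z2 _ gphi).
move=> g [[a _ <-] | [-> | ->]] w /=; rewrite ?mul1mx //.
  by rewrite [w]vec2_eta mulmx_mx2_vec2 !nrm2_vec2; ring.
by rewrite [w]vec2_eta mulmx_mx2_vec2 !nrm2_vec2; ring.
Qed.

Lemma conj_eq_Daff : conj_eq (Daff R) (Mgrp R) (Lgrp R).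
Proof. by rewrite Mgrp_Z2 Lgrp_DZ2; apply: conj_eq_linaff; exact: Dmx_unit. Qed.

Lemma normA_Dsharp phi : normA (Mgrp R) phi <-> normA (Lgrp R) (Dsharp phi).
Proof. by rewrite Mgrp_Z2 Lgrp_DZ2; exact: (iff_sym (normA_conjlin _ _ Dmx_unit)). Qed.

Lemma star_eq_Dsharp phi psi :
  star_eq (Mgrp R) phi psi <-> star_eq (Lgrp R) (Dsharp phi) (Dsharp psi).
Proof.
by rewrite Mgrp_Z2 Lgrp_DZ2; apply: star_eq_conjlin; [exact: Dmx_unit | exact: addsubgroup_Z2].
Qed.

Lemma Dsharp_acomp (phi psi : aff) :
  Dsharp (acomp phi psi) = acomp (Dsharp phi) (Dsharp psi).
Proof. exact: (conjlinM _ _ Dmx_unit). Qed.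

Lemma DsharpK (chi : aff) : Dsharp (conjlin (invmx (Dmx R)) chi) = chi.
Proof. exact: (conjlinK _ Dmx_unit). Qed.

Lemma preserves_Dsharp q phi :
  preserves q (lin (Dsharp phi)) <-> preserves (fun w => q (Dmx R *m w)) (lin phi).
Proof. exact: (preserves_conjlin _ _ Dmx_unit). Qed.

Lemma Sym_Lgrp chi : normA (Lgrp R) chi ->
  in_Sym (Lgrp R) chi <->
  exists2 phi, gen_Aff (Mgrp R) (Kset R `|` [set linaff (Bmx R); linaff (Cmx R)]) phi
             & star_eq (Lgrp R) (Dsharp phi) chi.
Proof.
set S := _ `|` _; have uD := Dmx_unit.
have St a : S (transl a) by left; exists a.
have gB : gen_Aff (transl_group Z2) S (linaff (intmx (-1, 1, 0, 1))).
  by apply: gen_Aff_intmx_invol; [rewrite intmx_mul -mx2_1 | right; left].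
have gC : gen_Aff (transl_group Z2) S (linaff (intmx (0, 1, 1, 0))).
  by apply: gen_Aff_intmx_invol; [rewrite intmx_mul -mx2_1 | right; right].
have gDZ2 := addsubgroup_mx_image (Dmx R) addsubgroup_Z2.
rewrite Mgrp_Z2 Lgrp_DZ2 => nchi.
have iso_iff := star_isometry_transl_group gDZ2 separated_DZ2 nchi.
split => [[_ chi_iso] | [phi gphi /(star_eq_lin gDZ2 separated_DZ2) chiE]].
  set phi := conjlin (invmx (Dmx R)) chi; exists phi; last by rewrite DsharpK.
  have nphi : normA (transl_group Z2) phi by rewrite -(normA_conjlin _ _ uD) conjlinK.
  have phi_hex : preserves (fun w => nrm2 (Dmx R *m w)) (lin phi).
    by rewrite -preserves_Dsharp DsharpK -iso_iff.
  have [[[[a b] c] d] phiE] := normA_Z2_intmx nphi.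
  rewrite phiE in phi_hex; have [h1 h2 h3] := preserves_hex_intmx phi_hex.
  apply: gen_Aff_transl_linaff St _; rewrite phiE.
  exact: (hex_isometry_generated (@gen_Aff_intmx_mul _ S) gB gC h1 h2 h3).
split => //; apply/iso_iff; rewrite -chiE preserves_Dsharp.
apply: (gen_Aff_preserves addsubgroup_Z2 separated_Z2 _ gphi).
move=> g [[a _ <-] | [-> | ->]] w /=; rewrite ?mul1mx //.
  by rewrite [w]vec2_eta mulmx_mx2_vec2 !nrm2_Dmx; ring.
by rewrite [w]vec2_eta mulmx_mx2_vec2 !nrm2_Dmx; ring.
Qed.
End Flat2.

Theorem lemma30 (R : realType) :
  (* Sym(M) = < K, A_*, C_* > *)
  (forall phi : aff R, normA (Mgrp R) phi ->
     (in_Sym (Mgrp R) phi <->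
      gen_Aff (Mgrp R) (Kset R `|` [set linaff (Amx R); linaff (Cmx R)]) phi)) /\
  (* D M D^{-1} = Lambda *)
  conj_eq (Daff R) (Mgrp R) (Lgrp R) /\
  (* D_sharp : Aff(M) -> Aff(Lambda) is a well-defined isomorphism *)
  ((forall phi, normA (Mgrp R) phi -> normA (Lgrp R) (Dsharp phi)) /\
   (forall phi psi, normA (Mgrp R) phi -> normA (Mgrp R) psi ->
      (star_eq (Mgrp R) phi psi <-> star_eq (Lgrp R) (Dsharp phi) (Dsharp psi))) /\
   (forall phi psi, normA (Mgrp R) phi -> normA (Mgrp R) psi ->
      star_eq (Lgrp R) (Dsharp (acomp phi psi)) (acomp (Dsharp phi) (Dsharp psi))) /\
   (forall chi, normA (Lgrp R) chi ->
      exists2 phi, normA (Mgrp R) phi & star_eq (Lgrp R) (Dsharp phi) chi)) /\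
  (* Sym(Lambda) = D_sharp(< K, B_*, C_* >) *)
  (forall chi : aff R, normA (Lgrp R) chi ->
     (in_Sym (Lgrp R) chi <->
      exists2 phi, gen_Aff (Mgrp R) (Kset R `|` [set linaff (Bmx R); linaff (Cmx R)]) phi
                   & star_eq (Lgrp R) (Dsharp phi) chi)).
Proof.
split; first exact: Sym_Mgrp.
split; first exact: conj_eq_Daff.
split; last exact: Sym_Lgrp.
split; first by move=> phi /normA_Dsharp.
split; first by move=> phi psi _ _; exact: star_eq_Dsharp.
split; first by move=> phi psi _ _ x; rewrite Dsharp_acomp.
move=> chi nchi; exists (conjlin (invmx (Dmx R)) chi); last by move=> x; rewrite DsharpK.
by apply/normA_Dsharp; rewrite DsharpK.
Qed.
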